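(* Consider the greedy algorithm (described in the context) run on a finite principal left ideal ring $R$ with a respectful order $<$, an ordered basis $B$ of $R^n$ and a left multiplicative property $P$ on $R^n$, producing nested codes $C_0\subseteq C_1\subseteq\dots\subseteq C_n$. Then for every $i\in\{1,\dots,n\}$, every vector $x\in V_i\setminus V_{i-1}$ such that $P[\gamma x+c]$ is true for all $\gamma\in\Gamma$ and all $c\in C_i$ already lies in $C_i$.
   Context: $R$ is a finite principal left ideal ring with unit group $R^\ast$; codes are left submodules of $R^n$. A property $P:R^n\to\{\text{true},\text{false}\}$ is left multiplicative if $P[ux]=P[x]$ for all $u\in R^\ast$, $x\in R^n$. A total order $<$ on $R$ is respectful if for all nonzero $x,y\in R$ with $Rx\supsetneq Ry$ there is $\alpha\in R^\ast$ with $\alpha x<uy$ for all $u\in R^\ast$. Fix an ordered basis $B=(b_1,\dots,b_n)$ of the free left module $R^n$; put $V_0=\{0\}$ and $V_i=Rb_1+\dots+Rb_i$. The lexicographic order on $R^n$: if $x\in V_{i-1}$ and $y\in V_i\setminus V_{i-1}$ then $x<y$; if $x\ne y$ both lie in the level set $V_i\setminus V_{i-1}$, write $x=\sum_{j\le i}x_jb_j$, $y=\sum_{j\le i}y_jb_j$, let $k$ be the largest index with $x_k\ne y_k$, and set $x<y$ iff $x_k<y_k$ in $R$. Fix a set $\Gamma\subseteq R$ containing one generator of each nonzero left ideal of $R$. Greedy algorithm: $C_0=\{0\}$; for $i=1,\dots,n$, let $a_i$ be the smallest vector of $V_i\setminus V_{i-1}$ (if any) such that $P[\gamma a_i+c]$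 is true for all $\gamma\in\Gamma$ and all $c\in C_{i-1}$; if such $a_i$ exists set $C_i=Ra_i+C_{i-1}$, otherwise $C_i=C_{i-1}$. The output $C_n$ is the lexicode $C(<,B,P)$. *)

From HB Require Import structures.
From mathcomp Require Import all_boot all_order all_algebra.
Set Implicit Arguments. Unset Strict Implicit. Unset Printing Implicit Defensive.
Import GRing.Theory.
Local Open Scope ring_scope.

Section LexDefs.
Variable R : finUnitRingType.

Definition lgen (x : R) : {set R} := [set r * x | r : R].

Definition left_ideal (I : {set R}) : Prop :=
  0 \in I /\ (forall a b, a \in I -> b \in I -> a + b \in I) /\
  (forall r a, a \in I -> r * a \in I).

Definition principal_left_ideal_ring : Prop :=
  forall I : {set R}, left_ideal I -> exists x : R, I = lgen x.

Definition strict_total_order (lt : rel R) : Prop :=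
  (forall x, ~~ lt x x) /\ (forall x y z, lt x y -> lt y z -> lt x z) /\
  (forall x y, x != y -> lt x y || lt y x).

Definition respectful (lt : rel R) : Prop :=
  forall x y : R, x != 0 -> y != 0 -> lgen y \proper lgen x ->
    exists alpha : R, alpha \is a GRing.unit /\
      forall u : R, u \is a GRing.unit -> lt (alpha * x) (u * y).

Definition generator_set (Gamma : {set R}) : Prop :=
  (forall g, g \in Gamma -> g != 0) /\
  (forall I : {set R}, left_ideal I -> I != [set 0] ->
     exists! g, g \in Gamma /\ I = lgen g).

Variable n : nat.

Definition left_multiplicative (P : 'rV[R]_n -> bool) : Prop :=
  forall (u : R) (x : 'rV[R]_n), u \is a GRing.unit -> P (u *: x) = P x.

Definition is_basis (B : 'I_n -> 'rV[R]_n) : Prop :=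
  forall x : 'rV[R]_n, exists! c : {ffun 'I_n -> R}, x = \sum_j c j *: B j.

(* membership in V_i = R b_1 + ... + R b_i (b_1 is B ord0) *)
Definition inV (B : 'I_n -> 'rV[R]_n) (i : nat) (x : 'rV[R]_n) : Prop :=
  exists c : {ffun 'I_n -> R},
    (forall j : 'I_n, (i <= j)%N -> c j = 0) /\ x = \sum_j c j *: B j.

Definition in_level (B : 'I_n -> 'rV[R]_n) (i : nat) (x : 'rV[R]_n) : Prop :=
  inV B i x /\ ~ inV B i.-1 x.

Definition lexlt (lt : rel R) (B : 'I_n -> 'rV[R]_n) (x y : 'rV[R]_n) : Prop :=
  exists i : nat, (1 <= i <= n)%N /\ in_level B i y /\
    (inV B i.-1 x \/
     (in_level B i x /\ x <> y /\
      exists (cx cy : {ffun 'I_n -> R}) (k : 'I_n),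
        x = \sum_j cx j *: B j /\ y = \sum_j cy j *: B j /\
        cx k <> cy k /\ (forall j : 'I_n, (k < j)%N -> cx j = cy j) /\
        lt (cx k) (cy k))).

Definition candidate (B : 'I_n -> 'rV[R]_n) (Gamma : {set R})
  (P : 'rV[R]_n -> bool) (Cprev : {set 'rV[R]_n}) (i : nat) (a : 'rV[R]_n) : Prop :=
  in_level B i a /\
  forall g c, g \in Gamma -> c \in Cprev -> P (g *: a + c).

Definition greedy_run (lt : rel R) (B : 'I_n -> 'rV[R]_n) (Gamma : {set R})
  (P : 'rV[R]_n -> bool) (C : nat -> {set 'rV[R]_n}) : Prop :=
  C 0%N = [set 0] /\
  forall i : nat, (1 <= i <= n)%N ->
    (exists a : 'rV[R]_n,
       candidate B Gamma P (C i.-1) i a /\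
       (forall b, candidate B Gamma P (C i.-1) i b -> b = a \/ lexlt lt B a b) /\
       C i = [set v | [exists r : R, exists c, (c \in C i.-1) && (v == r *: a + c)]])
    \/
    ((forall a, ~ candidate B Gamma P (C i.-1) i a) /\ C i = C i.-1).

End LexDefs.

From HB Require Import structures.
From mathcomp Require Import all_boot all_order all_algebra.
Set Implicit Arguments.
Unset Strict Implicit.
Unset Printing Implicit Defensive.

Import GRing.Theory.
Local Open Scope ring_scope.

(* A finite ring has stable range one: if R a + L = R for a left ideal L, then
   a + l is a unit for some l in L. This is proved in every corner ring f R f
   (f idempotent) by induction on |f R f|. Some power e = a^p is idempotent and
   commutes with a. If e <> 0, then a is invertible in e R e, the problem for a
   descends to the smaller corner e' R e' with e' = f - e, and the two halves
   are glued by the Peirce decomposition along f = e + e', in which the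
   candidate a + e' m is lower triangular. If a is nilpotent, it is first
   replaced by a non-nilpotent element of a + L.
   Stable range one makes generators of the same principal left ideal
   associates, and gives y in R (x + t y) for some t when every left ideal is
   principal. Now let x be admissible at level i and a_i the greedy vector. If
   the leading coefficient of x were not a left multiple of that of a_i, a unit
   multiple of x + t a_i would be a candidate whose leading coefficient
   precedes that of a_i in the respectful order, against the choice of a_i.
   Hence x - r a_i lies in V_(i-1), is admissible at its own level, and so lies
   in C_(i-1) by induction. *)

Section CornerRing.
Variable R : finPzRingType.
Implicit Types (e f a b c u x y : R) (L : {set R}).

(* For idempotent f, [corner f] is the ring f R f with identity f, and
   [corner_unit f x] says that x is a unit of that ring. *)
Definition corner f := [set x | f * x * f == x].

Definition corner_unit f x := exists2 b, b \in corner f & b * x = f /\ x * b = f.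

Lemma idempotent_power a : exists2 p, (0 < p)%N & a ^+ p * a ^+ p = a ^+ p.
Proof.
pose pw (k : 'I_#|R|.+1) := a ^+ k.
have /injectivePn[i [j neq_ij eq_ij]] : ~~ injectiveb pw.
  by apply/injectiveP => /leq_card; rewrite card_ord ltnn.
wlog lt_ij : i j neq_ij eq_ij / (i < j)%N.
  move=> W; case: (ltngtP i j) => [|lt_ji|/val_inj eq_ij']; first exact: W.
    by apply: (W j i); rewrite // eq_sym.
  by rewrite eq_ij' eqxx in neq_ij.
have {}eq_ij : a ^+ i = a ^+ j := eq_ij.
pose m := (j - i)%N.
have shift k : (i <= k)%N -> a ^+ (k + m) = a ^+ k.
  by move=> /subnK <-; rewrite -addnA subnKC ?(ltnW lt_ij) // !exprD -eq_ij.
have periodic (t k : nat) : (i <= k)%N -> a ^+ (k + t * m) = a ^+ k.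
  elim: t k => [|t IHt] k le_ik; first by rewrite addn0.
  by rewrite mulSn addnA IHt ?shift // (leq_trans le_ik) ?leq_addr.
exists (i.+1 * m)%N; first by rewrite muln_gt0 subn_gt0 lt_ij.
by rewrite -exprD periodic // (leq_trans (leqnSn i)) // leq_pmulr // subn_gt0.
Qed.

Section Idempotent.
Variable f : R.
Hypothesis ff : f * f = f.

Lemma cornerP x : reflect (f * x = x /\ x * f = x) (x \in corner f).
Proof.
rewrite inE; apply: (iffP eqP) => [fxf|[-> ->]] //; rewrite -fxf.
by split; [rewrite !mulrA ff | rewrite -!mulrA ff].
Qed.

Lemma corner_mull x : x \in corner f -> f * x = x.
Proof. by case/cornerP. Qed.

Lemma corner_mulr x : x \in corner f -> x * f = x.
Proof. by case/cornerP. Qed.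

Lemma corner0 : 0 \in corner f.
Proof. by rewrite inE mulr0 mul0r. Qed.

Lemma corner_id : f \in corner f.
Proof. by rewrite inE !ff. Qed.

Lemma cornerD x y : x \in corner f -> y \in corner f -> x + y \in corner f.
Proof.
move=> /cornerP[fx xf] /cornerP[fy yf].
by apply/cornerP; rewrite mulrDr mulrDl fx xf fy yf.
Qed.

Lemma cornerN x : x \in corner f -> - x \in corner f.
Proof. by move=> /cornerP[fx xf]; apply/cornerP; rewrite mulrN mulNr fx xf. Qed.

Lemma cornerB x y : x \in corner f -> y \in corner f -> x - y \in corner f.
Proof. by move=> cx cy; rewrite cornerD ?cornerN. Qed.

Lemma cornerM x y : x \in corner f -> y \in corner f -> x * y \in corner f.
Proof.
by move=> /cornerP[fx _] /cornerP[_ yf]; apply/cornerP; rewrite mulrA fx -mulrA yf.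
Qed.

Lemma cornerX x k : x \in corner f -> (0 < k)%N -> x ^+ k \in corner f.
Proof.
move=> cx; case: k => // k _; elim: k => [|k IHk]; first by rewrite expr1.
by rewrite exprS cornerM.
Qed.

Lemma corner_compress x : f * x * f \in corner f.
Proof. by apply/cornerP; split; [rewrite !mulrA ff | rewrite -!mulrA ff]. Qed.

Lemma corner_unit_nil_sub x k : x \in corner f -> x ^+ k = 0 ->
  exists2 y, y \in corner f & y * (f - x) = f.
Proof.
move=> cx xk0; exists (\sum_(i < k) x ^+ i * f).
  apply: (big_ind (fun y => y \in corner f)); [exact: corner0 | exact: @cornerD |].
  case=> [[|i]] _ _ /=; first by rewrite mul1r corner_id.
  by rewrite corner_mulr ?cornerX.
rewrite mulr_suml -(big_mkord xpredT (fun i => x ^+ i * f * (f - x))).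
rewrite (telescope_sumr_eq (fun i => - (x ^+ i * f))) // => [|i _].
  by rewrite xk0 mul0r oppr0 sub0r expr0 mul1r opprK.
rewrite mulrBr -!mulrA ff (corner_mull cx) -exprSr opprK addrC.
by rewrite (corner_mulr (cornerX cx (ltn0Sn i))).
Qed.

Lemma nil_linv_eq0 a w k : f * a = a -> w * a = f -> a ^+ k = 0 -> a = 0.
Proof.
move=> fa wa; case: k => [|k]; first by rewrite expr0 -[a]mulr1 => ->; rewrite mulr0.
elim: k => [|k IHk] ak0; first by rewrite expr1 in ak0.
apply: IHk; have fak : f * a ^+ k.+1 = a ^+ k.+1 by rewrite exprS mulrA fa.
by rewrite -fak -wa -mulrA -exprS ak0 mulr0.
Qed.

Lemma corner_nil_sum_eq0 a u l k q : a \in corner f -> l \in corner f ->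
  u * a + l = f -> a ^+ k = 0 -> l ^+ q = 0 -> f = 0.
Proof.
move=> a_f l_f uaf ak0 lq0; have [y _ yl] := corner_unit_nil_sub l_f lq0.
have yua : y * u * a = f by rewrite -mulrA -yl -uaf addrK.
by rewrite -yua (nil_linv_eq0 (corner_mull a_f) yua ak0) mulr0.
Qed.

End Idempotent.

Lemma corner_sub f e : f * f = f -> e * e = e -> e \in corner f ->
  {subset corner e <= corner f}.
Proof.
move=> ff ee /(cornerP ff)[fe ef] x /(cornerP ee)[ex xe]; apply/(cornerP ff).
by split; [rewrite -ex mulrA fe | rewrite -xe -mulrA ef].
Qed.

Section Complement.
Variables f e : R.
Hypotheses (ff : f * f = f) (ee : e * e = e) (e_f : e \in corner f).

Lemma mul_corner_subr : e * (f - e) = 0.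
Proof. by rewrite mulrBr (corner_mulr ff e_f) ee subrr. Qed.

Lemma mul_subr_corner : (f - e) * e = 0.
Proof. by rewrite mulrBl (corner_mull ff e_f) ee subrr. Qed.

Lemma corner_subr_idem : (f - e) * (f - e) = f - e.
Proof. by rewrite mulrBl mul_corner_subr subr0 mulrBr ff (corner_mull ff e_f). Qed.

Lemma corner_subr : f - e \in corner f.
Proof. exact: (cornerB ff (corner_id ff) e_f). Qed.

Lemma card_corner_subr : e != 0 -> (#|corner (f - e)%R| < #|corner f|)%N.
Proof.
move=> e_neq0; apply/proper_card/properP; split.
  by apply/subsetP; exact: (corner_sub ff corner_subr_idem corner_subr).
by exists e; rewrite // inE mul_subr_corner mul0r eq_sym.
Qed.

End Complement.

Lemma corner_unit_triangular e e' c :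
  e * e = e -> e' * e' = e' -> e * e' = 0 -> e' * e = 0 ->
  c \in corner (e + e') -> e * c * e' = 0 ->
  corner_unit e (e * c * e) -> corner_unit e' (e' * c * e') ->
  corner_unit (e + e') c.
Proof.
move=> ee e'e' ee' e'e c_f ece'0 [x x_e [xc cx]] [y y_e' [yc cy]].
have ff : (e + e') * (e + e') = e + e'.
  by rewrite mulrDl !mulrDr ee ee' e'e e'e' addr0 add0r.
have e_f : e \in corner (e + e').
  by rewrite inE mulrDl ee e'e addr0 mulrDr ee ee' addr0.
have e'_f : e' \in corner (e + e').
  by rewrite inE mulrDl ee' e'e' add0r mulrDr e'e e'e' add0r.
have /(cornerP ee)[ex xe] := x_e.
have /(cornerP e'e')[e'y ye'] := y_e'.
have xe' : x * e' = 0 by rewrite -xe -mulrA ee' mulr0.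
have e'x : e' * x = 0 by rewrite -ex mulrA e'e mul0r.
have ye : y * e = 0 by rewrite -ye' -mulrA e'e mulr0.
have ey : e * y = 0 by rewrite -e'y mulrA ee' mul0r.
have peirce : c = e * c * e + e' * c * e + e' * c * e'.
  move: c_f; rewrite inE => /eqP {1}<-.
  by rewrite !mulrDl !mulrDr ece'0 addr0 addrA.
have xc' : x * c = e.
  by rewrite {1}peirce !mulrDr xc !mulrA xe' !mul0r !addr0.
have yc' : y * c = y * (e' * c * e) + e'.
  by rewrite {1}peirce !mulrDr yc !mulrA ye !mul0r add0r.
have cx' : c * x = e + e' * c * x.
  by rewrite {1}peirce !mulrDl cx -!mulrA ex e'x !mulr0 addr0.
have cy' : c * y = e'.
  by rewrite {1}peirce !mulrDl cy -!mulrA ey !mulr0 !add0r.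
exists (x + y - y * c * x).
  have x_f := corner_sub ff ee e_f x_e; have y_f := corner_sub ff e'e' e'_f y_e'.
  by rewrite cornerB ?cornerD ?cornerM.
split.
  rewrite mulrBl mulrDl -[y * c * x * c]mulrA xc' yc' mulrDl e'e addr0.
  by rewrite -[y * _ * e]mulrA -[e' * c * e * e]mulrA ee addrCA addrAC subrr add0r.
by rewrite mulrBr mulrDr !mulrA cy' cx' addrAC addrK.
Qed.

Lemma idempotent_power_corner_unit a p : (0 < p)%N -> a ^+ p * a ^+ p = a ^+ p ->
  corner_unit (a ^+ p) (a * a ^+ p).
Proof.
move=> p_gt0 ee; set e := a ^+ p in ee *.
have ae : GRing.comm a e := commrX p (commr_refl a).
have a'e : GRing.comm (a ^+ p.-1) e :=
  commrX p (commr_sym (commrX p.-1 (commr_refl a))).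
have a'a : a ^+ p.-1 * a = e by rewrite -exprSr prednK.
have aa' : a * a ^+ p.-1 = e by rewrite -exprS prednK.
exists (a ^+ p.-1 * e); first by rewrite inE !mulrA -a'e -!mulrA !ee.
split.
  by rewrite -mulrA [e * _]mulrA -ae -mulrA ee mulrA a'a ee.
by rewrite -mulrA [e * (_ * e)]mulrA -a'e -mulrA ee mulrA aa' ee.
Qed.

Definition corner_left_ideal f L :=
  [/\ {subset L <= corner f}, {in L &, forall x y, x + y \in L}
    & forall s x, s \in corner f -> x \in L -> s * x \in L].

Lemma corner_left_ideal_compress f e L : f * f = f -> e * e = e -> e \in corner f ->
  corner_left_ideal f L -> corner_left_ideal e [set e * x * e | x in L].
Proof.
move=> ff ee e_f [_ addL mulL]; split.
- by move=> _ /imsetP[x _ ->]; exact: (corner_compress ee).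
- move=> _ _ /imsetP[x xL ->] /imsetP[y yL ->].
  by apply/imsetP; exists (x + y); rewrite ?addL // mulrDr mulrDl.
move=> s _ s_e /imsetP[x xL ->]; have /(cornerP ee)[es se] := s_e.
apply/imsetP; exists (s * x); last by rewrite !mulrA se -{1}es.
by rewrite mulL // (corner_sub ff ee e_f).
Qed.

Definition corner_stable_range f :=
  forall a u l L, a \in corner f -> u \in corner f -> corner_left_ideal f L ->
    l \in L -> u * a + l = f -> exists2 l', l' \in L & corner_unit f (a + l').

Lemma corner_left_idealX f L l k : f * f = f -> corner_left_ideal f L ->
  l \in L -> (0 < k)%N -> l ^+ k \in L.
Proof.
move=> ff [L_f _ mulL] lL; case: k => // k _.
elim: k => [|k IHk]; first by rewrite expr1.
by rewrite exprSr mulL // (cornerX ff (L_f _ lL)).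
Qed.

Lemma corner_stable_range_compress f e a u l L :
  f * f = f -> e * e = e -> e \in corner f -> GRing.comm a e -> corner_stable_range e ->
  u \in corner f -> corner_left_ideal f L -> l \in L -> u * a + l = f ->
  exists2 m, m \in L & corner_unit e (a * e + e * m * e).
Proof.
move=> ff ee e_f ae e_sr u_f Lf lL uaf.
have [_ /imsetP[m mL ->] unit_e] :
    exists2 l', l' \in [set e * x * e | x in L] & corner_unit e (a * e + l').
  apply: (e_sr _ (e * u * e) (e * l * e)).
  - have -> : a * e = e * a * e by rewrite -ae -mulrA ee.
    exact: (corner_compress ee).
  - exact: (corner_compress ee).
  - exact: corner_left_ideal_compress ff ee e_f Lf.
  - by apply/imsetP; exists l.
  rewrite mulrA -(mulrA _ e a) -ae mulrA -(mulrA _ e e) ee.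
  by rewrite -mulrDl -(mulrA e u a) -mulrDr uaf (corner_mulr ff e_f) ee.
by exists m.
Qed.

Lemma corner_stable_range_nonnil f a u l L p :
  f * f = f ->
  (forall e, e * e = e -> (#|corner e| < #|corner f|)%N -> corner_stable_range e) ->
  a \in corner f -> u \in corner f -> corner_left_ideal f L -> l \in L ->
  u * a + l = f -> (0 < p)%N -> a ^+ p * a ^+ p = a ^+ p -> a ^+ p != 0 ->
  exists2 l', l' \in L & corner_unit f (a + l').
Proof.
move=> ff IH a_f u_f Lf lL uaf p_gt0 ee e_neq0; have [L_f _ mulL] := Lf.
set e := a ^+ p in ee e_neq0.
have e_f : e \in corner f := cornerX ff a_f p_gt0.
have ee' := mul_corner_subr ff ee e_f; have e'e := mul_subr_corner ff ee e_f.
set e' := f - e in ee' e'e.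
have e'e' : e' * e' = e' := corner_subr_idem ff ee e_f.
have e'_f : e' \in corner f := corner_subr ff e_f.
have ae : GRing.comm a e := commrX p (commr_refl a).
have ae' : GRing.comm a e'.
  by rewrite /GRing.comm mulrBr mulrBl (corner_mulr ff a_f) (corner_mull ff a_f) ae.
have fE : e + e' = f := subrKC e f.
have lt_e'f : (#|corner e'| < #|corner f|)%N := card_corner_subr ff ee e_f e_neq0.
clearbody e'.
have [m mL unit_e'] :=
  corner_stable_range_compress ff e'e' e'_f ae' (IH _ e'e' lt_e'f) u_f Lf lL uaf.
exists (e' * m); first exact: mulL e'_f mL.
have c_f : a + e' * m \in corner f := cornerD ff a_f (cornerM ff e'_f (L_f _ mL)).
(* Along e + e' = f, the element a + e' m has diagonal blocks a e and
   a e' + e' m e' and upper-right block e (a + e' m) e' = 0. *)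
rewrite -fE in c_f *.
apply: corner_unit_triangular => //.
- by rewrite mulrDr mulrA ee' mul0r addr0 -ae -mulrA ee' mulr0.
- have -> : e * (a + e' * m) * e = a * e.
    by rewrite mulrDr mulrA ee' mul0r addr0 -ae -mulrA ee.
  exact: idempotent_power_corner_unit.
have -> : e' * (a + e' * m) * e' = a * e' + e' * m * e'.
  by rewrite mulrDr mulrDl -ae' -mulrA e'e' mulrA e'e'.
exact: unit_e'.
Qed.

Lemma corner_stable_range_idem f : f * f = f -> corner_stable_range f.
Proof.
move: {2}#|corner f| (leqnn #|corner f|) => N; elim: N f => [|N IHN] f le_fN ff.
  by move: le_fN; rewrite leqn0 (cardD1 0) corner0.
have IH e : e * e = e -> (#|corner e| < #|corner f|)%N -> corner_stable_range e.
  by move=> ee lt_ef; apply: IHN ee; rewrite -ltnS (leq_trans lt_ef).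
move=> a u l L a_f u_f Lf lL uaf; have [L_f addL mulL] := Lf.
have [p p_gt0 ap_idem] := idempotent_power a.
have [ap0 | ap_neq0] := eqVneq (a ^+ p) 0; last first.
  exact: corner_stable_range_nonnil ff IH a_f u_f Lf lL uaf p_gt0 ap_idem ap_neq0.
have [q q_gt0 lq_idem] := idempotent_power l.
have [lq0 | lq_neq0] := eqVneq (l ^+ q) 0.
  have f0 : f = 0 := corner_nil_sum_eq0 ff a_f (L_f _ lL) uaf ap0 lq0.
  by exists l => //; exists 0; rewrite ?f0 ?corner0 ?mul0r ?mulr0.
set e := l ^+ q in lq_idem lq_neq0.
have eL : e \in L := corner_left_idealX ff Lf lL q_gt0.
(* a is nilpotent but l is not: a1 fixes the nonzero idempotent e = l^q. *)
pose l1 := (f - a) * e.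
have l1L : l1 \in L by rewrite mulL ?cornerB ?corner_id.
pose a1 := a + l1.
have a1e : a1 * e = e.
  by rewrite mulrDl -mulrA lq_idem mulrBl addrC subrK (corner_mull ff (L_f _ eL)).
have a1ke k : a1 ^+ k * e = e.
  by elim: k => [|k IHk]; rewrite ?expr0 ?mul1r // exprSr -mulrA a1e.
have [p1 p1_gt0 a1p_idem] := idempotent_power a1.
have a1p_neq0 : a1 ^+ p1 != 0.
  by apply: contra_neq lq_neq0 => a1p0; rewrite -(a1ke p1) a1p0 mul0r.
have l2L : l - u * l1 \in L by rewrite addL // -mulNr mulL ?cornerN.
have ua1f : u * a1 + (l - u * l1) = f by rewrite mulrDr addrACA subrr addr0.
have [l' l'L a1l'_unit] := corner_stable_range_nonnil ff IH
  (cornerD ff a_f (L_f _ l1L)) u_f Lf l2L ua1f p1_gt0 a1p_idem a1p_neq0.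
by exists (l1 + l'); rewrite ?addL ?addrA.
Qed.

End CornerRing.

Section LeftIdeals.
Variable R : finUnitRingType.
Implicit Types (a b p q u x y : R) (I L : {set R}).

Lemma left_ideal_stable_range L a u l : left_ideal L -> l \in L -> u * a + l = 1 ->
  exists2 l', l' \in L & a + l' \is a GRing.unit.
Proof.
move=> [_ [addL mulL]] lL ual.
have in1 x : x \in corner 1 by rewrite inE mul1r mulr1.
have L1 : corner_left_ideal 1 L.
  by split=> [x _ | x y | s x _]; [exact: in1 | exact: addL | exact: mulL].
have [l' l'L [b _ [bal abl]]] :=
  corner_stable_range_idem (mulr1 1) (in1 a) (in1 u) L1 lL ual.
by exists l' => //; apply/unitrP; exists b.
Qed.

Lemma lgenP x y : reflect (exists r, y = r * x) (y \in lgen x).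
Proof. by apply: (iffP imsetP) => [[r _ ->]|[r ->]]; exists r. Qed.

Lemma lgen_mem x : x \in lgen x.
Proof. by apply/lgenP; exists 1; rewrite mul1r. Qed.

Lemma lgen_left_ideal x : left_ideal (lgen x).
Proof.
split; first by apply/lgenP; exists 0; rewrite mul0r.
split=> [_ _ /lgenP[r ->] /lgenP[s ->]|r _ /lgenP[s ->]]; apply/lgenP.
  by exists (r + s); rewrite mulrDl.
by exists (r * s); rewrite mulrA.
Qed.

Lemma lgen_neq0 x : x != 0 -> lgen x != [set 0].
Proof. by apply: contraNneq => x0; rewrite -in_set1 -x0 lgen_mem. Qed.

Lemma associate_mod_left_ideal I x y p u :
  left_ideal I -> x = p * y -> y - u * x \in I ->
  exists2 w, w \is a GRing.unit & w * y - x \in I.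
Proof.
move=> [I0 [addI mulI]] xE yux.
pose L := [set r | r * y \in I].
have L_ideal : left_ideal L.
  split; first by rewrite inE mul0r.
  split=> [r s|r s]; rewrite !inE ?mulrDl -?mulrA; [exact: addI | exact: mulI].
have uL : 1 - u * p \in L by rewrite inE mulrBl mul1r -mulrA -xE.
have [l lL w_unit] := left_ideal_stable_range L_ideal uL (subrKC _ 1).
rewrite inE in lL; by exists (p + l); rewrite // mulrDl -xE addrAC subrr add0r.
Qed.

Lemma lgen_eq_unit_mul a b :
  lgen a = lgen b -> exists2 w, w \is a GRing.unit & a = w * b.
Proof.
move=> eq_ab.
have /lgenP[s aE] : a \in lgen b by rewrite -eq_ab lgen_mem.
have /lgenP[t bE] : b \in lgen a by rewrite eq_ab lgen_mem.
have bta : b - t * a \in lgen 0 by rewrite -bE subrr; case: (lgen_left_ideal 0).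
have [w w_unit /lgenP[r]] := associate_mod_left_ideal (lgen_left_ideal 0) aE bta.
by rewrite mulr0 => /eqP; rewrite subr_eq0 eq_sym => /eqP; exists w.
Qed.

Lemma principal_lgen_shift x y : principal_left_ideal_ring R ->
  exists t, y \in lgen (x + t * y).
Proof.
move=> PR; pose J := [set r * x + s * y | r : R, s : R].
have JP z : reflect (exists r s, z = r * x + s * y) (z \in J).
  apply: (iffP idP) => [/imset2P[r s _ _ ->]|[r [s ->]]]; first by exists r, s.
  by apply: imset2_f.
have J_ideal : left_ideal J.
  split; first by apply/JP; exists 0, 0; rewrite !mul0r addr0.
  split=> [_ _ /JP[r1 [s1 ->]] /JP[r2 [s2 ->]] | r _ /JP[r1 [s1 ->]]]; apply/JP.
    by exists (r1 + r2), (s1 + s2); rewrite !mulrDl addrACA.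
  by exists (r * r1), (r * s1); rewrite mulrDr !mulrA.
have [beta Jbeta] := PR J J_ideal.
have /JP[u [v betaE]] : beta \in J by rewrite Jbeta lgen_mem.
have /lgenP[p xE] : x \in lgen beta.
  by rewrite -Jbeta; apply/JP; exists 1, 0; rewrite mul1r mul0r addr0.
have /lgenP[q yE] : y \in lgen beta.
  by rewrite -Jbeta; apply/JP; exists 0, 1; rewrite mul1r mul0r add0r.
have : beta - u * x \in lgen y.
  by rewrite betaE addrAC subrr add0r; apply/lgenP; exists v.
case/(associate_mod_left_ideal (lgen_left_ideal y) xE) => w w_unit /lgenP[t tE].
by exists t; apply/lgenP; exists (q * w^-1); rewrite -tE subrKC -mulrA mulKr.
Qed.

Lemma generator_set_assoc Gamma x : generator_set Gamma -> x != 0 ->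
  exists2 g, g \in Gamma & exists2 v, v \is a GRing.unit & x = v * g.
Proof.
move=> [_ gen] x_neq0.
have [g [[gG xg] _]] := gen _ (lgen_left_ideal x) (lgen_neq0 x_neq0).
by exists g => //; apply: lgen_eq_unit_mul.
Qed.

Lemma respectful_lead_shift (lt : rel R) x y :
  principal_left_ideal_ring R -> respectful lt -> y != 0 -> x \notin lgen y ->
  exists t w, [/\ w \is a GRing.unit, x + t * y != 0 & lt (w * (x + t * y)) y].
Proof.
move=> PR lt_resp y_neq0 x_notin.
have [t y_in] := principal_lgen_shift x y PR.
set z := x + t * y in y_in.
have z_notin : z \notin lgen y.
  apply: contra x_notin => /lgenP[r zE]; apply/lgenP; exists (r - t).
  by rewrite mulrBl -zE addrK.
have z_neq0 : z != 0 by apply: contraNneq z_notin => ->; case: (lgen_left_ideal y).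
have y_z : lgen y \proper lgen z.
  apply/properP; split; last by exists z; rewrite ?lgen_mem.
  apply/subsetP => _ /lgenP[r ->]; have /lgenP[s ->] := y_in.
  by apply/lgenP; exists (r * s); rewrite mulrA.
have [w [w_unit w_lt]] := lt_resp _ _ z_neq0 y_neq0 y_z.
by exists t, w; rewrite -/z; split=> //; rewrite -[y]mul1r w_lt ?unitr1.
Qed.

End LeftIdeals.

Section Lexicode.
Variables (R : finUnitRingType) (n : nat) (B : 'I_n -> 'rV[R]_n).
Hypothesis B_basis : is_basis B.
Implicit Types (a v x y : 'rV[R]_n) (T : {set 'rV[R]_n}) (r : R).

Definition coord x : {ffun 'I_n -> R} :=
  odflt [ffun => 0] [pick c : {ffun 'I_n -> R} | x == \sum_j c j *: B j].

Lemma coordE x : x = \sum_j coord x j *: B j.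
Proof.
rewrite /coord; case: pickP => [c /eqP //|no_c].
by have [c [xE _]] := B_basis x; move: (no_c c); rewrite -xE eqxx.
Qed.

Lemma coord_uniq x (c : {ffun 'I_n -> R}) : x = \sum_j c j *: B j -> coord x = c.
Proof.
move=> xE; have [c0 [_ uniq_c]] := B_basis x.
by rewrite -(uniq_c _ xE) (uniq_c _ (coordE x)).
Qed.

Lemma coord_lin r x y j : coord (r *: x + y) j = r * coord x j + coord y j.
Proof.
suff -> : coord (r *: x + y) = [ffun j => r * coord x j + coord y j] by rewrite ffunE.
apply: coord_uniq; rewrite {1}(coordE x) {1}(coordE y) scaler_sumr -big_split /=.
by apply: eq_bigr => i _; rewrite ffunE scalerDl scalerA.
Qed.

Lemma coord0 j : coord 0 j = 0.
Proof.
suff -> : coord 0 = [ffun => 0] by rewrite ffunE.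
by apply: coord_uniq; rewrite big1 // => i _; rewrite ffunE scale0r.
Qed.

Lemma coordD x y j : coord (x + y) j = coord x j + coord y j.
Proof. by rewrite -{1}(scale1r x) coord_lin mul1r. Qed.

Lemma coordZ r x j : coord (r *: x) j = r * coord x j.
Proof. by rewrite -(addr0 (r *: x)) coord_lin coord0 addr0. Qed.

Lemma coordB x y j : coord (x - y) j = coord x j - coord y j.
Proof. by rewrite -scaleN1r coordD coordZ mulN1r. Qed.

Lemma inVP k x : inV B k x <-> forall j : 'I_n, (k <= j)%N -> coord x j = 0.
Proof.
split=> [[c [c_high xE]] j le_kj | x_high]; first by rewrite (coord_uniq xE) c_high.
by exists (coord x); split=> //; apply: coordE.
Qed.

Lemma inV_mono k k' x : (k <= k')%N -> inV B k x -> inV B k' x.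
Proof.
by move=> le_kk' /inVP x_high; apply/inVP => j /(leq_trans le_kk'); apply: x_high.
Qed.

Lemma levelP (I : 'I_n) x : in_level B I.+1 x <->
  (forall j : 'I_n, (I < j)%N -> coord x j = 0) /\ coord x I != 0.
Proof.
split=> [[/inVP x_high x_low] | [x_high xI_neq0]].
  split=> //; apply/eqP => xI0; apply: x_low; apply/inVP => j.
  by rewrite leq_eqVlt => /orP[/eqP/val_inj <- // | /x_high].
split; first exact/inVP.
by move=> /inVP/(_ I (leqnn I))/eqP; rewrite (negbTE xI_neq0).
Qed.

Lemma level_uniq i k x : in_level B i x -> in_level B k x -> i = k.
Proof.
move=> [xi x_not_i] [xk x_not_k]; case: (ltngtP i k) => // lt_ik; exfalso.
  by apply: x_not_k; apply: inV_mono xi; rewrite -ltnS prednK // (leq_ltn_trans _ lt_ik).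
by apply: x_not_i; apply: inV_mono xk; rewrite -ltnS prednK // (leq_ltn_trans _ lt_ik).
Qed.

Lemma level_exists k x : inV B k x -> x != 0 ->
  exists2 J : 'I_n, (J < k)%N & in_level B J.+1 x.
Proof.
elim: k => [|k IHk] xk x_neq0.
  case/eqP: x_neq0; rewrite (coordE x) big1 // => j _.
  by rewrite (proj1 (inVP 0 x) xk j (leq0n j)) scale0r.
have [xk' | /forallPn[j]] := boolP [forall j : 'I_n, (k <= j)%N ==> (coord x j == 0)].
  have [|J lt_Jk xJ] := IHk _ x_neq0; last by exists J => //; apply: ltnW.
  by apply/inVP => j le_kj; apply/eqP; move/forallP/(_ j): xk'; rewrite le_kj.
rewrite negb_imply => /andP[le_kj xj_neq0].
have lt_kn : (k < n)%N := leq_ltn_trans le_kj (ltn_ord j).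
exists (Ordinal lt_kn) => //=; split=> // /inVP/(_ j le_kj)/eqP.
by rewrite (negbTE xj_neq0).
Qed.

Definition extend (T : {set 'rV[R]_n}) a :=
  [set v | [exists r : R, exists c, (c \in T) && (v == r *: a + c)]].

Lemma mem_extend T a v :
  reflect (exists r c, c \in T /\ v = r *: a + c) (v \in extend T a).
Proof.
rewrite inE; apply: (iffP existsP).
  by move=> [r /existsP[c /andP[cT /eqP ->]]]; exists r, c.
by move=> [r [c [cT ->]]]; exists r; apply/existsP; exists c; rewrite cT eqxx.
Qed.

Variables (lt : rel R) (Gamma : {set R}) (P : 'rV[R]_n -> bool).

Definition admissible (T : {set 'rV[R]_n}) x :=
  forall g c, g \in Gamma -> c \in T -> P (g *: x + c).

Variable C : nat -> {set 'rV[R]_n}.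
Hypothesis C_greedy : greedy_run lt B Gamma P C.

Lemma greedy_step k : (k < n)%N ->
  (exists a, candidate B Gamma P (C k) k.+1 a /\
     (forall b, candidate B Gamma P (C k) k.+1 b -> b = a \/ lexlt lt B a b) /\
     C k.+1 = extend (C k) a)
  \/ ((forall a, ~ candidate B Gamma P (C k) k.+1 a) /\ C k.+1 = C k).
Proof. by move=> lt_kn; apply: C_greedy.2. Qed.

Lemma greedy_code0 k : (k <= n)%N -> 0 \in C k.
Proof.
elim: k => [|k IHk] le_kn; first by rewrite C_greedy.1 inE.
have [[a [_ [_ ->]]] | [_ ->]] := greedy_step le_kn; last exact: IHk (ltnW le_kn).
by apply/mem_extend; exists 0, 0; rewrite scale0r addr0 IHk // ltnW.
Qed.

Lemma greedy_codeZ k r x : (k <= n)%N -> x \in C k -> r *: x \in C k.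
Proof.
elim: k x => [|k IHk] x le_kn.
  by rewrite C_greedy.1 !inE => /eqP ->; rewrite scaler0 eqxx.
have [[a [_ [_ ->]]] | [_ ->]] := greedy_step le_kn; last exact: IHk x (ltnW le_kn).
move=> /mem_extend[s [c [cC ->]]]; apply/mem_extend; exists (r * s), (r *: c).
by rewrite IHk ?(ltnW le_kn) // scalerDr scalerA.
Qed.
Lemma greedy_code_mono k k' : (k <= k')%N -> (k' <= n)%N -> C k \subset C k'.
Proof.
elim: k' => [|k' IHk'] le_kk' le_k'n; first by move: le_kk'; rewrite leqn0 => /eqP ->.
move: le_kk'; rewrite leq_eqVlt => /orP[/eqP -> // | /IHk'/(_ (ltnW le_k'n))].
move=> /subset_trans; apply; apply/subsetP => x xC.
have [[a [_ [_ ->]]] | [_ ->]] := greedy_step le_k'n => //.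
by apply/mem_extend; exists 0, x; rewrite scale0r add0r.
Qed.

Hypotheses (lt_order : strict_total_order lt) (lt_respectful : respectful lt)
  (Gamma_gen : generator_set Gamma) (P_mult : left_multiplicative P)
  (R_plir : principal_left_ideal_ring R).

Lemma lexlt_lead_coord (I : 'I_n) a z : lexlt lt B a z ->
  in_level B I.+1 a -> in_level B I.+1 z -> ~ lt (coord z I) (coord a I).
Proof.
have [lt_irr [lt_trans _]] := lt_order.
move=> [i [_ [zi [a_low | [_ [_ [ca [cz [k [aE [zE [ne_k [eq_above lt_k]]]]]]]]]]]]]
  aI zI lt_za.
  by case: aI => _; apply; rewrite (level_uniq zi zI) in a_low.
rewrite -(coord_uniq aE) -(coord_uniq zE) in ne_k eq_above lt_k.
have [[a_high _] [z_high _]] := (proj1 (levelP I a) aI, proj1 (levelP I z) zI).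
case: (ltngtP k I) => [lt_kI | lt_Ik | /val_inj kI].
- by rewrite (eq_above I lt_kI) (negbTE (lt_irr _)) in lt_za.
- by case: ne_k; rewrite a_high ?z_high.
- by rewrite kI in lt_k; move: (lt_trans _ _ _ lt_k lt_za); rewrite (negbTE (lt_irr _)).
Qed.

Lemma admissible_unit_shift T a x w t : (forall r c, c \in T -> r *: c \in T) ->
  w \is a GRing.unit -> admissible (extend T a) x -> admissible T (w *: (x + t *: a)).
Proof.
move=> TZ w_unit x_adm g c gG cT.
have gw_neq0 : g * w != 0.
  by apply: contraNneq (Gamma_gen.1 g gG) => gw0; rewrite -(mulrK w_unit g) gw0 mul0r.
have [g' g'G [v v_unit gwE]] := generator_set_assoc Gamma_gen gw_neq0.
have -> : g *: (w *: (x + t *: a)) + c = v *: (g' *: x + ((g' * t) *: a + v^-1 *: c)).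
  by rewrite scalerA gwE !scalerDr !scalerA mulrV // scale1r !mulrA addrA.
rewrite P_mult //; apply: x_adm => //.
by apply/mem_extend; exists (g' * t), (v^-1 *: c); rewrite TZ.
Qed.

Lemma greedy_lead_lgen (I : 'I_n) a x : in_level B I.+1 a ->
  (forall b, candidate B Gamma P (C I) I.+1 b -> b = a \/ lexlt lt B a b) ->
  in_level B I.+1 x -> admissible (extend (C I) a) x -> coord x I \in lgen (coord a I).
Proof.
move=> aI a_min xI x_adm; apply/negPn/negP => xI_notin.
have [lt_irr _] := lt_order.
have al_neq0 : coord a I != 0 := (proj1 (levelP I a) aI).2.
have [t [w [w_unit ze_neq0 lt_wze]]] :=
  respectful_lead_shift R_plir lt_respectful al_neq0 xI_notin.
set ze := coord x I + t * coord a I in ze_neq0 lt_wze.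
pose z := w *: (x + t *: a).
have z_coord j : coord z j = w * (coord x j + t * coord a j).
  by rewrite coordZ coordD coordZ.
have zI : in_level B I.+1 z.
  have [[x_high _] [a_high _]] := (proj1 (levelP I x) xI, proj1 (levelP I a) aI).
  apply/levelP; split=> [j lt_Ij|].
    by rewrite z_coord x_high // a_high // mulr0 addr0 mulr0.
  rewrite z_coord -/ze; apply: contra ze_neq0 => /eqP wze0.
  by rewrite -(mulKr w_unit ze) wze0 mulr0.
have z_cand : candidate B Gamma P (C I) I.+1 z.
  split=> //; apply: admissible_unit_shift w_unit x_adm => r c.
  exact: greedy_codeZ (ltnW (ltn_ord I)).
have lt_zI : lt (coord z I) (coord a I) by rewrite z_coord.
case: (a_min z z_cand) => [za | a_z]; first by rewrite za (negbTE (lt_irr _)) in lt_zI.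
exact: lexlt_lead_coord a_z aI zI lt_zI.
Qed.

Lemma greedy_complete i : (1 <= i <= n)%N ->
  forall x, in_level B i x -> admissible (C i) x -> x \in C i.
Proof.
elim/ltn_ind: i => i IHi /andP[i_gt0 le_in] x xi x_adm.
case: i i_gt0 le_in xi x_adm IHi => // k _ lt_kn xk x_adm IHk.
pose I := Ordinal lt_kn.
have [[a [[aI _] [a_min Ck1]]] | [no_cand Ck1]] := greedy_step lt_kn; last first.
  by case: (no_cand x); split=> //; rewrite -Ck1.
rewrite Ck1 in x_adm *.
have /lgenP[r xr] := greedy_lead_lgen (I := I) aI a_min xk x_adm.
pose y := x - r *: a.
have yk : inV B k y.
  have [[x_high _] [a_high _]] := (proj1 (levelP I x) xk, proj1 (levelP I a) aI).
  apply/inVP => j; rewrite coordB coordZ leq_eqVlt => /orP[/eqP kj | lt_kj].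
    have -> : j = I by apply: val_inj; rewrite /= kj.
    by rewrite xr subrr.
  by rewrite x_high // a_high // mulr0 subr0.
apply/mem_extend; exists r, y; split; last by rewrite addrC subrK.
have [-> | y_neq0] := eqVneq y 0; first exact: greedy_code0 (ltnW lt_kn).
have [J lt_Jk yJ] := level_exists yk y_neq0.
have CJk : C J.+1 \subset C k := greedy_code_mono lt_Jk (ltnW lt_kn).
apply: (subsetP CJk); apply: IHk => //; first by rewrite /= (leq_trans (ltn_ord J)).
move=> g c gG cJ; have -> : g *: y + c = g *: x + ((- (g * r)) *: a + c).
  by rewrite scalerBr scalerA scaleNr addrA.
by apply: x_adm => //; apply/mem_extend; exists (- (g * r)), c; rewrite (subsetP CJk).
Qed.

End Lexicode.

Theorem mainTheorem7 (R : finUnitRingType) (n : nat)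
  (lt : rel R) (B : 'I_n -> 'rV[R]_n) (Gamma : {set R})
  (P : 'rV[R]_n -> bool) (C : nat -> {set 'rV[R]_n}) :
  principal_left_ideal_ring R ->
  strict_total_order lt -> respectful lt ->
  is_basis B -> generator_set Gamma -> left_multiplicative P ->
  greedy_run lt B Gamma P C ->
  forall i : nat, (1 <= i <= n)%N ->
  forall x : 'rV[R]_n, in_level B i x ->
    (forall g c, g \in Gamma -> c \in C i -> P (g *: x + c)) ->
    x \in C i.
Proof.
move=> R_plir lt_order lt_respectful B_basis Gamma_gen P_mult C_greedy i i_range.
exact: (greedy_complete B_basis C_greedy lt_order lt_respectful Gamma_gen P_mult
  R_plir i_range).
Qed.
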